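(* Let $W$ be a channel with finite input alphabet $\mathcal X$ and finite output alphabet $\mathcal Y$, let $P$ be an input distribution with $I(P,W)=C_W$ and $V_{P,W}>0$, and let $R_2<0$. Then \[ \lim_{n\to\infty}\ n\min_{0\le s\le1}\Big(C_Ws+\frac{R_2}{\sqrt n}s+\psi_P(s)\Big)=-\frac{R_2^2}{2V_{P,W}}. \]
   Context: Logs natural. $W_P=\sum_xP(x)W_x$, $D$ is relative entropy, $I(P,W)=\sum_xP(x)D(W_x\|W_P)$, $C_W=\max_PI(P,W)$, $V_{P,W}=\sum_xP(x)\sum_yW_x(y)\big(\log\frac{W_x(y)}{W_P(y)}-D(W_x\|W_P)\big)^2$, and the Gallager function is $\psi_P(s)=\log\sum_y\big(\sum_xP(x)W_x(y)^{1/(1+s)}\big)^{1+s}$ for $s\ge0$. *)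

From Stdlib Require Import Reals Lra.
Open Scope R_scope.

(* Finite alphabets: input alphabet X = {0,...,nx-1}, output Y = {0,...,ny-1}.
   A channel is W : nat -> nat -> R with W x y = W_x(y). *)

Fixpoint fsum (n : nat) (f : nat -> R) : R :=
  match n with
  | O => 0
  | S m => fsum m f + f m
  end.

Definition is_distr (n : nat) (P : nat -> R) : Prop :=
  (forall i, (i < n)%nat -> 0 <= P i) /\ fsum n P = 1.

Definition is_channel (nx ny : nat) (W : nat -> nat -> R) : Prop :=
  forall x, (x < nx)%nat -> is_distr ny (W x).

Definition WP (nx : nat) (P : nat -> R) (W : nat -> nat -> R) (y : nat) : R :=
  fsum nx (fun x => P x * W x y).

(* relative entropy D(W_x || W_P), natural log, convention 0 log 0 = 0 *)
Definition Dx (nx ny : nat) (P : nat -> R) (W : nat -> nat -> R) (x : nat) : R :=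
  fsum ny (fun y => if Rlt_dec 0 (W x y)
                    then W x y * ln (W x y / WP nx P W y) else 0).

Definition MI (nx ny : nat) (P : nat -> R) (W : nat -> nat -> R) : R :=
  fsum nx (fun x => if Rlt_dec 0 (P x) then P x * Dx nx ny P W x else 0).

(* C is the capacity: C = max_P I(P,W) (here: the least upper bound of I(P,W)
   over input distributions; the theorem additionally assumes it is attained). *)
Definition is_capacity (nx ny : nat) (W : nat -> nat -> R) (C : R) : Prop :=
  is_lub (fun r => exists Q, is_distr nx Q /\ r = MI nx ny Q W) C.

Definition Vdisp (nx ny : nat) (P : nat -> R) (W : nat -> nat -> R) : R :=
  fsum nx (fun x => if Rlt_dec 0 (P x) then
    P x * fsum ny (fun y => if Rlt_dec 0 (W x y) then
       W x y * (ln (W x y / WP nx P W y) - Dx nx ny P W x) ^ 2 else 0)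
    else 0).

(* a^b for a >= 0, b > 0, with 0^b = 0 *)
Definition rpow (a b : R) : R := if Rlt_dec 0 a then Rpower a b else 0.

Definition psi (nx ny : nat) (P : nat -> R) (W : nat -> nat -> R) (s : R) : R :=
  ln (fsum ny (fun y =>
        rpow (fsum nx (fun x => P x * rpow (W x y) (1 / (1 + s)))) (1 + s))).

Definition is_min_on (f : R -> R) (a b m : R) : Prop :=
  (exists s, a <= s <= b /\ f s = m) /\ (forall s, a <= s <= b -> m <= f s).

From Pilot Require Import Defs.
From Stdlib Require Import Reals Lra Lia.
Open Scope R_scope.

(* Put f(s) = C s + psi_P(s) and V = V_{P,W}.  The proof has three ingredients.
   1. Local expansion: f(s) = V/2 s^2 + o(s^2) as s -> 0+.  Writing
        psi_P(s) = ln sum_y W_P(y) X_y(s)^(1+s),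
      where X_y(s) is the posterior mean of exp(-s/(1+s) i(x,y)) and
      i(x,y) = ln W_x(y) - ln W_P(y) is the information density, a small
      calculus of second-order expansions at 0+ ("jets") gives
        psi_P(s) = - I s + (E[i^2] - I^2)/2 s^2 + o(s^2),   I = I(P,W).
   2. Global lower bound: I s + psi_P(s) >= ln (1 + k s^2 (E[i^2] - I^2)) on
      [0,1] for some k > 0, from  exp u >= 1 + u + c u^2  for bounded u.
   3. P achieves capacity, so the KKT conditions D(W_x || W_P) = I(P,W) hold on
      the support of P; hence C = I and V = E[i^2] - I^2.
   The abstract lemma [scaled_minimum_limit] turns 1 and 2 into the limit: the
   minimiser sits near s = -R2/(V sqrt n), where n times the minimum is close
   to -R2^2/(2V), while s away from 0 only contributes nonnegative values. *)

Lemma fsum_ext n f g : (forall i, (i < n)%nat -> f i = g i) -> fsum n f = fsum n g.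
Proof.
  induction n as [|n IH]; simpl; intros H; auto.
  rewrite IH by (intros; apply H; lia). rewrite H by lia. reflexivity.
Qed.

Lemma fsum_plus n f g : fsum n (fun i => f i + g i) = fsum n f + fsum n g.
Proof. induction n as [|n IH]; simpl; [lra|]. rewrite IH; lra. Qed.

Lemma fsum_minus n f g : fsum n (fun i => f i - g i) = fsum n f - fsum n g.
Proof. induction n as [|n IH]; simpl; [lra|]. rewrite IH; lra. Qed.

Lemma fsum_scal n c f : fsum n (fun i => c * f i) = c * fsum n f.
Proof. induction n as [|n IH]; simpl; [lra|]. rewrite IH; lra. Qed.

Lemma fsum_scal_r n c f : fsum n (fun i => f i * c) = fsum n f * c.
Proof. induction n as [|n IH]; simpl; [lra|]. rewrite IH; lra. Qed.

Lemma fsum_zero n : fsum n (fun _ => 0) = 0.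
Proof. induction n as [|n IH]; simpl; [lra|]. rewrite IH; lra. Qed.

Lemma fsum_swap n m f :
  fsum n (fun i => fsum m (fun j => f i j)) = fsum m (fun j => fsum n (fun i => f i j)).
Proof.
  induction n as [|n IH]; simpl; [rewrite fsum_zero; reflexivity|].
  rewrite IH, <- fsum_plus. reflexivity.
Qed.

Lemma fsum_le n f g : (forall i, (i < n)%nat -> f i <= g i) -> fsum n f <= fsum n g.
Proof.
  induction n as [|n IH]; simpl; intros H; [lra|].
  assert (f n <= g n) by (apply H; lia).
  assert (fsum n f <= fsum n g) by (apply IH; intros; apply H; lia). lra.
Qed.

Lemma fsum_nonneg n f : (forall i, (i < n)%nat -> 0 <= f i) -> 0 <= fsum n f.
Proof. intros H. rewrite <- (fsum_zero n). apply fsum_le; auto. Qed.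

Lemma fsum_term_le n f i :
  (forall j, (j < n)%nat -> 0 <= f j) -> (i < n)%nat -> f i <= fsum n f.
Proof.
  induction n as [|n IH]; simpl; intros H Hi; [lia|].
  assert (0 <= f n) by (apply H; lia).
  destruct (Nat.eq_dec i n) as [->|Hne].
  - assert (0 <= fsum n f) by (apply fsum_nonneg; intros; apply H; lia). lra.
  - assert (f i <= fsum n f) by (apply IH; [intros; apply H; lia|lia]). lra.
Qed.

Lemma fsum_zero_term n f i :
  (forall j, (j < n)%nat -> 0 <= f j) -> fsum n f = 0 -> (i < n)%nat -> f i = 0.
Proof.
  intros H H0 Hi. assert (f i <= fsum n f) by (apply fsum_term_le; auto).
  assert (0 <= f i) by auto. lra.
Qed.

Lemma fsum_pos_ex n f : 0 < fsum n f -> exists i, (i < n)%nat /\ 0 < f i.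
Proof.
  induction n as [|n IH]; simpl; intros H; [lra|].
  destruct (Rlt_dec 0 (f n)) as [Hn|Hn]; [exists n; split; auto|].
  destruct IH as [i [Hi Hf]]; [lra|]. exists i; split; auto.
Qed.

Lemma fsum_abs n f : Rabs (fsum n f) <= fsum n (fun i => Rabs (f i)).
Proof.
  induction n as [|n IH]; simpl; [rewrite Rabs_R0; lra|].
  eapply Rle_trans; [apply Rabs_triang|]. lra.
Qed.

(* Kronecker delta, used for point-mass perturbations of an input distribution. *)
Definition kdelta (x z : nat) : R := if Nat.eq_dec z x then 1 else 0.

Lemma fsum_kdelta n x f : (x < n)%nat -> fsum n (fun z => kdelta x z * f z) = f x.
Proof.
  assert (Hbelow : forall k, (k <= x)%nat -> fsum k (fun z => kdelta x z * f z) = 0).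
  { induction k as [|k IH]; simpl; intros Hk; auto.
    rewrite IH by lia. unfold kdelta. destruct (Nat.eq_dec k x); [lia|lra]. }
  induction n as [|n IH]; simpl; intros H; [lia|].
  unfold kdelta at 2. destruct (Nat.eq_dec n x) as [->|Hne].
  - rewrite Hbelow by lia. lra.
  - rewrite IH by lia. lra.
Qed.

Lemma exp_le a b : a <= b -> exp a <= exp b.
Proof. intros [H| ->]; [left; apply exp_increasing; auto|lra]. Qed.

Lemma ln_le a b : 0 < a -> a <= b -> ln a <= ln b.
Proof. intros Ha [H| ->]; [left; apply ln_increasing; auto|lra]. Qed.

Lemma ln_div a b : 0 < a -> 0 < b -> ln (a / b) = ln a - ln b.
Proof.
  intros. unfold Rdiv. rewrite ln_mult, ln_Rinv by (auto; apply Rinv_0_lt_compat; auto). ring.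
Qed.

Definition small_o2 (e : R -> R) := forall eps, 0 < eps -> exists del, 0 < del /\
  forall s, 0 <= s < del -> Rabs (e s) <= eps * (s * s).

Lemma small_o2_ext e1 e2 d0 :
  0 < d0 -> (forall s, 0 <= s < d0 -> e1 s = e2 s) -> small_o2 e1 -> small_o2 e2.
Proof.
  intros Hd Heq H eps Heps. destruct (H eps Heps) as [del [Hdel Hb]].
  exists (Rmin del d0). split; [apply Rmin_pos; auto|].
  intros s Hs. pose proof (Rmin_l del d0). pose proof (Rmin_r del d0).
  rewrite <- Heq by lra. apply Hb. lra.
Qed.

Lemma small_o2_plus e1 e2 : small_o2 e1 -> small_o2 e2 -> small_o2 (fun s => e1 s + e2 s).
Proof.
  intros H1 H2 eps Heps.
  destruct (H1 (eps/2)) as [d1 [Hd1 B1]]; [lra|].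
  destruct (H2 (eps/2)) as [d2 [Hd2 B2]]; [lra|].
  exists (Rmin d1 d2). split; [apply Rmin_pos; auto|].
  intros s Hs. pose proof (Rmin_l d1 d2). pose proof (Rmin_r d1 d2).
  specialize (B1 s ltac:(lra)). specialize (B2 s ltac:(lra)).
  eapply Rle_trans; [apply Rabs_triang|]. lra.
Qed.

Lemma small_o2_mul_bounded e h K d0 :
  0 < d0 -> (forall s, 0 <= s < d0 -> Rabs (h s) <= K) -> small_o2 e ->
  small_o2 (fun s => e s * h s).
Proof.
  intros Hd0 Hh H eps Heps. pose proof (Rabs_pos K). pose proof (Rle_abs K).
  destruct (H (eps / (Rabs K + 1))) as [d [Hd B]]; [apply Rdiv_lt_0_compat; lra|].
  exists (Rmin d d0). split; [apply Rmin_pos; auto|].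
  intros s Hs. pose proof (Rmin_l d d0). pose proof (Rmin_r d d0).
  specialize (B s ltac:(lra)). specialize (Hh s ltac:(lra)). rewrite Rabs_mult.
  pose proof (Rabs_pos (h s)). pose proof (Rabs_pos (e s)).
  assert (Rabs (e s) * Rabs (h s) <= (eps / (Rabs K + 1) * (s * s)) * (Rabs K + 1))
    by (apply Rmult_le_compat; lra).
  replace ((eps / (Rabs K + 1) * (s * s)) * (Rabs K + 1)) with (eps * (s * s))
    in * by (field; lra). lra.
Qed.

Lemma small_o2_scal c e : small_o2 e -> small_o2 (fun s => c * e s).
Proof.
  intros H. apply (small_o2_ext (fun s => e s * c) _ 1); [lra| intros; simpl; ring|].
  apply (small_o2_mul_bounded _ _ (Rabs c) 1); [lra| intros; lra| exact H].
Qed.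

Lemma small_o2_cubic e K d0 :
  0 < d0 -> (forall s, 0 <= s < d0 -> Rabs (e s) <= K * (s * s * s)) -> small_o2 e.
Proof.
  intros Hd0 H eps Heps. pose proof (Rabs_pos K). pose proof (Rle_abs K).
  exists (Rmin d0 (eps / (Rabs K + 1))).
  split; [apply Rmin_pos; auto; apply Rdiv_lt_0_compat; lra|].
  intros s Hs. pose proof (Rmin_l d0 (eps / (Rabs K + 1))).
  pose proof (Rmin_r d0 (eps / (Rabs K + 1))).
  assert (Hs_eps : s * (Rabs K + 1) <= eps).
  { replace eps with (eps / (Rabs K + 1) * (Rabs K + 1)) by (field; lra).
    apply Rmult_le_compat_r; lra. }
  specialize (H s ltac:(lra)). assert (0 <= s * s) by nra.
  assert (0 <= s * s * s) by (apply Rmult_le_pos; nra).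
  assert (K * (s * s * s) <= (Rabs K + 1) * s * (s * s)).
  { replace ((Rabs K + 1) * s * (s * s)) with ((Rabs K + 1) * (s * s * s)) by ring.
    apply Rmult_le_compat_r; lra. }
  assert ((Rabs K + 1) * s * (s * s) <= eps * (s * s)) by (apply Rmult_le_compat_r; lra).
  lra.
Qed.

Definition jet (f : R -> R) (c a b : R) := small_o2 (fun s => f s - c - a * s - b * (s * s)).

Lemma jet_coef f c a b c' a' b' : jet f c a b -> c = c' -> a = a' -> b = b' -> jet f c' a' b'.
Proof. intros H -> -> ->; auto. Qed.

Lemma jet_ext f g c a b d0 :
  0 < d0 -> (forall s, 0 <= s < d0 -> f s = g s) -> jet f c a b -> jet g c a b.
Proof. intros Hd H HJ. eapply small_o2_ext; [apply Hd| |apply HJ]. intros s Hs; simpl. rewrite H; auto. Qed.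

Lemma jet_const c : jet (fun _ => c) c 0 0.
Proof. apply (small_o2_cubic _ 0 1); [lra|]. intros s _. replace (c - c - 0 * s - 0 * (s * s)) with 0 by ring. rewrite Rabs_R0. lra. Qed.

Lemma jet_id : jet (fun s => s) 0 1 0.
Proof. apply (small_o2_cubic _ 0 1); [lra|]. intros s _. replace (s - 0 - 1 * s - 0 * (s * s)) with 0 by ring. rewrite Rabs_R0. lra. Qed.

Lemma jet_plus f g c a b c' a' b' : jet f c a b -> jet g c' a' b' ->
  jet (fun s => f s + g s) (c + c') (a + a') (b + b').
Proof.
  intros H1 H2. eapply small_o2_ext; [apply Rlt_0_1| |apply (small_o2_plus _ _ H1 H2)].
  intros; simpl; ring.
Qed.

Lemma jet_scal k f c a b : jet f c a b -> jet (fun s => k * f s) (k * c) (k * a) (k * b).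
Proof.
  intros H. eapply small_o2_ext; [apply Rlt_0_1| |apply (small_o2_scal k _ H)].
  intros; simpl; ring.
Qed.

Lemma jet_fsum n (f : nat -> R -> R) c a b :
  (forall i, (i < n)%nat -> jet (f i) (c i) (a i) (b i)) ->
  jet (fun s => fsum n (fun i => f i s)) (fsum n c) (fsum n a) (fsum n b).
Proof.
  induction n as [|n IH]; intros H; simpl.
  - apply jet_coef with 0 0 0; [apply jet_const|ring|ring|ring].
  - apply (jet_plus (fun s => fsum n (fun i => f i s)) (f n)).
    + apply IH. intros; apply H; lia.
    + apply H; lia.
Qed.

Lemma jet_linear_bound f c a b : jet f c a b ->
  exists K d, 0 < d /\ 0 <= K /\ forall s, 0 <= s < d -> Rabs (f s - c) <= K * s.
Proof.
  intros H. destruct (H 1 Rlt_0_1) as [d [Hd B]].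
  pose proof (Rabs_pos a). pose proof (Rabs_pos b).
  exists (Rabs a + Rabs b + 1), (Rmin d 1).
  split; [apply Rmin_pos; lra|]. split; [lra|].
  intros s Hs. pose proof (Rmin_l d 1). pose proof (Rmin_r d 1).
  specialize (B s ltac:(lra)).
  replace (f s - c) with ((f s - c - a * s - b * (s * s)) + a * s + b * (s * s)) by ring.
  pose proof (Rabs_triang (f s - c - a * s - b * (s * s) + a * s) (b * (s * s))).
  pose proof (Rabs_triang (f s - c - a * s - b * (s * s)) (a * s)).
  rewrite !Rabs_mult in *. rewrite (Rabs_right s) in * by lra.
  assert (Rabs b * (s * s) <= Rabs b * s) by (apply Rmult_le_compat_l; nra). nra.
Qed.

Lemma jet_bounded f c a b : jet f c a b ->
  exists K d, 0 < d /\ forall s, 0 <= s < d -> Rabs (f s) <= K.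
Proof.
  intros H. destruct (jet_linear_bound _ _ _ _ H) as [K [d [Hd [HK B]]]].
  exists (Rabs c + K), (Rmin d 1). split; [apply Rmin_pos; lra|].
  intros s Hs. pose proof (Rmin_l d 1). pose proof (Rmin_r d 1).
  specialize (B s ltac:(lra)). replace (f s) with ((f s - c) + c) by ring.
  eapply Rle_trans; [apply Rabs_triang|]. nra.
Qed.

Lemma jet_mul f g c a b c' a' b' : jet f c a b -> jet g c' a' b' ->
  jet (fun s => f s * g s) (c * c') (c * a' + a * c') (c * b' + a * a' + b * c').
Proof.
  intros H1 H2. destruct (jet_bounded _ _ _ _ H2) as [Kg [dg [Hdg Bg]]].
  set (e1 := fun s => f s - c - a * s - b * (s * s)).
  set (e2 := fun s => g s - c' - a' * s - b' * (s * s)).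
  set (p := fun s => c + a * s + b * (s * s)).
  apply small_o2_ext with (d0 := 1) (e1 := fun s =>
    (e1 s * g s + e2 s * p s) + ((a * b' + b * a') * (s * s * s) + b * b' * (s * s * s * s)));
    [lra| intros s _; unfold e1, e2, p; ring|].
  pose proof (Rabs_pos a). pose proof (Rabs_pos b).
  apply small_o2_plus; [apply small_o2_plus|].
  - apply small_o2_mul_bounded with Kg dg; auto.
  - apply small_o2_mul_bounded with (Rabs c + Rabs a + Rabs b) 1; auto; [lra|].
    intros s Hs. unfold p.
    pose proof (Rabs_triang (c + a * s) (b * (s * s))). pose proof (Rabs_triang c (a * s)).
    rewrite !Rabs_mult in *. rewrite (Rabs_right s) in * by lra.
    assert (s * s <= 1) by nra.
    assert (Rabs b * (s * s) <= Rabs b) by nra. assert (Rabs a * s <= Rabs a) by nra. lra.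
  - apply small_o2_cubic with (Rabs (a * b' + b * a') + Rabs (b * b')) 1; [lra|].
    intros s Hs.
    pose proof (Rabs_triang ((a * b' + b * a') * (s * s * s)) (b * b' * (s * s * s * s))) as Ht.
    rewrite (Rabs_mult (a * b' + b * a')), (Rabs_mult (b * b')) in Ht.
    assert (0 <= s * s * s) by (apply Rmult_le_pos; nra).
    rewrite (Rabs_right (s * s * s)), (Rabs_right (s * s * s * s)) in Ht by nra.
    pose proof (Rabs_pos (a * b' + b * a')). pose proof (Rabs_pos (b * b')).
    assert (Rabs (b * b') * (s * s * s * s) <= Rabs (b * b') * (s * s * s))
      by (apply Rmult_le_compat_l; nra). nra.
Qed.

Definition taylor2 (F : R -> R) (c d1 d2 : R) := forall eps, 0 < eps -> exists del, 0 < del /\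
  forall u, Rabs u < del -> Rabs (F (c + u) - F c - d1 * u - d2 * (u * u)) <= eps * (u * u).

Lemma small_o2_taylor_remainder F c d1 d2 (u : R -> R) K d :
  taylor2 F c d1 d2 -> 0 < d -> 0 <= K -> (forall s, 0 <= s < d -> Rabs (u s) <= K * s) ->
  small_o2 (fun s => F (c + u s) - F c - d1 * u s - d2 * (u s * u s)).
Proof.
  intros HF Hd HK Hu eps Heps.
  destruct (HF (eps / ((K + 1) * (K + 1)))) as [dF [HdF BF]];
    [apply Rdiv_lt_0_compat; nra|].
  exists (Rmin d (dF / (K + 1))). split; [apply Rmin_pos; auto; apply Rdiv_lt_0_compat; lra|].
  intros s Hs. pose proof (Rmin_l d (dF / (K + 1))). pose proof (Rmin_r d (dF / (K + 1))).
  specialize (Hu s ltac:(lra)). pose proof (Rabs_pos (u s)).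
  assert (Hsmall : s * (K + 1) < dF).
  { replace dF with (dF / (K + 1) * (K + 1)) by (field; lra).
    apply Rmult_lt_compat_r; lra. }
  specialize (BF (u s) ltac:(nra)).
  assert (Hsq : u s * u s <= (K + 1) * (K + 1) * (s * s)).
  { replace (u s * u s) with (Rabs (u s) * Rabs (u s))
      by (rewrite <- Rabs_mult; apply Rabs_right; nra).
    assert (Rabs (u s) <= (K + 1) * s) by nra.
    assert (Rabs (u s) * Rabs (u s) <= ((K + 1) * s) * ((K + 1) * s))
      by (apply Rmult_le_compat; lra). lra. }
  eapply Rle_trans; [apply BF|].
  replace (eps * (s * s)) with (eps / ((K + 1) * (K + 1)) * ((K + 1) * (K + 1) * (s * s)))
    by (field; lra).
  apply Rmult_le_compat_l; [apply Rlt_le, Rdiv_lt_0_compat; nra|exact Hsq].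
Qed.

(* If f(s) = c + a s + O(s^2), then (f s - c)^2 - (a s)^2 = o(s^2). *)
Lemma jet_square_correction f c a b : jet f c a b ->
  small_o2 (fun s => (f s - c - a * s) * (f s - c + a * s)).
Proof.
  intros H. destruct (H 1 Rlt_0_1) as [d [Hd B]].
  pose proof (Rabs_pos a). pose proof (Rabs_pos b).
  apply small_o2_cubic with ((Rabs b + 1) * (Rabs b + 1 + 2 * Rabs a)) (Rmin d 1);
    [apply Rmin_pos; lra|].
  intros s Hs. pose proof (Rmin_l d 1). pose proof (Rmin_r d 1).
  specialize (B s ltac:(lra)).
  assert (Hm : Rabs (f s - c - a * s) <= (Rabs b + 1) * (s * s)).
  { replace (f s - c - a * s) with ((f s - c - a * s - b * (s * s)) + b * (s * s)) by ring.
    eapply Rle_trans; [apply Rabs_triang|].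
    rewrite Rabs_mult, (Rabs_right (s * s)) by nra. lra. }
  assert (Hp : Rabs (f s - c + a * s) <= (Rabs b + 1 + 2 * Rabs a) * s).
  { replace (f s - c + a * s) with ((f s - c - a * s) + 2 * (a * s)) by ring.
    eapply Rle_trans; [apply Rabs_triang|].
    rewrite !Rabs_mult, (Rabs_right s), (Rabs_right 2) by lra.
    assert (s * s <= s) by nra. nra. }
  rewrite Rabs_mult.
  pose proof (Rabs_pos (f s - c - a * s)). pose proof (Rabs_pos (f s - c + a * s)).
  assert (Rabs (f s - c - a * s) * Rabs (f s - c + a * s)
          <= ((Rabs b + 1) * (s * s)) * ((Rabs b + 1 + 2 * Rabs a) * s))
    by (apply Rmult_le_compat; auto). nra.
Qed.

Lemma jet_comp F f c a b d1 d2 : taylor2 F c d1 d2 -> jet f c a b ->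
  jet (fun s => F (f s)) (F c) (d1 * a) (d1 * b + d2 * (a * a)).
Proof.
  intros HF H. destruct (jet_linear_bound _ _ _ _ H) as [K [d [Hd [HK B]]]].
  apply small_o2_ext with (d0 := 1) (e1 := fun s =>
    (F (c + (f s - c)) - F c - d1 * (f s - c) - d2 * ((f s - c) * (f s - c)))
    + d1 * (f s - c - a * s - b * (s * s))
    + d2 * ((f s - c - a * s) * (f s - c + a * s)));
    [lra| intros s _; replace (c + (f s - c)) with (f s) by ring; ring|].
  apply small_o2_plus; [apply small_o2_plus|].
  - exact (small_o2_taylor_remainder F c d1 d2 (fun s => f s - c) K d HF Hd HK B).
  - apply small_o2_scal, H.
  - apply small_o2_scal, (jet_square_correction f c a b H).
Qed.

(* The mean value theorem turns |phi'(x)| <= eps |x| into |phi u - phi 0| <= eps u^2. *)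
Lemma increment_quadratic_bound (phi phi' : R -> R) (u eps : R) :
  0 <= eps ->
  (forall x, Rabs x <= Rabs u -> derivable_pt_lim phi x (phi' x)) ->
  (forall x, Rabs x <= Rabs u -> Rabs (phi' x) <= eps * Rabs x) ->
  Rabs (phi u - phi 0) <= eps * (u * u).
Proof.
  intros Heps Hder Hbd.
  assert (Hstep : forall xi, Rabs xi <= Rabs u -> Rabs (phi' xi * u) <= eps * (u * u)).
  { intros xi Hxi. rewrite Rabs_mult. specialize (Hbd xi Hxi).
    pose proof (Rabs_pos xi). pose proof (Rabs_pos u). pose proof (Rabs_pos (phi' xi)).
    replace (u * u) with (Rabs u * Rabs u) by (rewrite <- Rabs_mult; apply Rabs_right; nra).
    apply Rle_trans with (eps * Rabs xi * Rabs u); [apply Rmult_le_compat_r; lra|].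
    rewrite Rmult_assoc. apply Rmult_le_compat_l; [lra|]. apply Rmult_le_compat_r; lra. }
  destruct (Rtotal_order u 0) as [Hlt|[->|Hgt]].
  - destruct (MVT_cor2 phi phi' u 0 Hlt) as [xi [Hxi Hxib]].
    { intros x Hx. apply Hder. rewrite !Rabs_left1; lra. }
    replace (phi u - phi 0) with (- (phi' xi * (0 - u))) by lra.
    rewrite Rabs_Ropp. replace (0 - u) with (- u) by ring.
    rewrite Rabs_mult, Rabs_Ropp, <- Rabs_mult.
    apply Hstep. rewrite !Rabs_left1; lra.
  - rewrite Rminus_diag, Rabs_R0. lra.
  - destruct (MVT_cor2 phi phi' 0 u Hgt) as [xi [Hxi Hxib]].
    { intros x Hx. apply Hder. rewrite !Rabs_right; lra. }
    rewrite Hxi, Rminus_0_r. apply Hstep. rewrite !Rabs_right; lra.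
Qed.

Lemma taylor2_of_derivatives (f f' : R -> R) (l d0 : R) : 0 < d0 ->
  (forall x, Rabs x < d0 -> derivable_pt_lim f x (f' x)) -> derivable_pt_lim f' 0 l ->
  taylor2 f 0 (f' 0) (l / 2).
Proof.
  intros Hd0 Hf Hf' eps Heps. destruct (Hf' eps Heps) as [delta Hdelta].
  exists (Rmin d0 delta). split; [apply Rmin_pos; auto; apply cond_pos|].
  intros u Hu. pose proof (Rmin_l d0 delta). pose proof (Rmin_r d0 delta).
  set (phi := fun x => f x - f 0 - f' 0 * x - l / 2 * (x * x)).
  set (phi' := fun x => f' x - f' 0 - l * x).
  replace (f (0 + u) - f 0 - f' 0 * u - l / 2 * (u * u)) with (phi u - phi 0)
    by (unfold phi; rewrite Rplus_0_l; ring).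
  apply (increment_quadratic_bound phi phi'); [lra| |].
  - intros x Hx. unfold phi, phi'.
    replace (f' x - f' 0 - l * x) with (f' x - 0 - f' 0 * 1 - l / 2 * (1 * x + x * 1)) by field.
    apply (derivable_pt_lim_minus (fun x => f x - f 0 - f' 0 * x) (fun x => l / 2 * (x * x))).
    + apply (derivable_pt_lim_minus (fun x => f x - f 0) (fun x => f' 0 * x)).
      * apply (derivable_pt_lim_minus f (fun _ => f 0)); [apply Hf; lra|apply derivable_pt_lim_const].
      * apply (derivable_pt_lim_scal id), derivable_pt_lim_id.
    + apply (derivable_pt_lim_scal (fun x => x * x)).
      apply (derivable_pt_lim_mult id id); apply derivable_pt_lim_id.
  - intros x Hx. destruct (Req_dec x 0) as [->|Hx0].
    + unfold phi'. replace (f' 0 - f' 0 - l * 0) with 0 by ring. rewrite !Rabs_R0. lra.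
    + specialize (Hdelta x Hx0 ltac:(lra)). rewrite Rplus_0_l in Hdelta.
      replace (phi' x) with (((f' x - f' 0) / x - l) * x) by (unfold phi'; field; auto).
      rewrite Rabs_mult. apply Rmult_le_compat_r; [apply Rabs_pos|lra].
Qed.

Lemma taylor2_exp c : taylor2 exp c (exp c) (exp c / 2).
Proof.
  assert (T0 : taylor2 exp 0 1 (1 / 2)).
  { rewrite <- exp_0 at 1 2. apply (taylor2_of_derivatives exp exp (exp 0) 1); [lra| |].
    - intros; apply derivable_pt_lim_exp.
    - apply derivable_pt_lim_exp. }
  intros eps Heps. pose proof (exp_pos c) as Hc.
  destruct (T0 (eps / exp c)) as [del [Hdel B]]; [apply Rdiv_lt_0_compat; auto|].
  exists del; split; auto. intros u Hu. specialize (B u Hu). rewrite exp_0, Rplus_0_l in B.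
  replace (exp (c + u) - exp c - exp c * u - exp c / 2 * (u * u))
    with (exp c * (exp u - 1 - 1 * u - 1 / 2 * (u * u))) by (rewrite exp_plus; field).
  rewrite Rabs_mult, (Rabs_right (exp c)) by lra.
  replace (eps * (u * u)) with (exp c * (eps / exp c * (u * u))) by (field; lra).
  apply Rmult_le_compat_l; lra.
Qed.

Lemma taylor2_ln_1 : taylor2 ln 1 1 (- / 2).
Proof.
  assert (T0 : taylor2 (fun v => ln (1 + v)) 0 (1 / (1 + 0)) (-1 / 2)).
  { apply (taylor2_of_derivatives (fun v => ln (1 + v)) (fun x => 1 / (1 + x)) (-1) (1 / 2));
      [lra| |].
    - intros x Hx. pose proof (Rabs_def2 x _ Hx).
      replace (1 / (1 + x)) with (/ (1 + x) * (0 + 1)) by (field; lra).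
      apply (derivable_pt_lim_comp (fun v => 1 + v) ln).
      + apply (derivable_pt_lim_plus (fun _ => 1) id);
          [apply derivable_pt_lim_const|apply derivable_pt_lim_id].
      + apply derivable_pt_lim_ln. lra.
    - replace (-1) with ((0 * (1 + 0) - (0 + 1) * 1) / (1 + 0)²) by (unfold Rsqr; field).
      apply (derivable_pt_lim_div (fun _ => 1) (fun v => 1 + v)); [apply derivable_pt_lim_const| |lra].
      apply (derivable_pt_lim_plus (fun _ => 1) id);
        [apply derivable_pt_lim_const|apply derivable_pt_lim_id]. }
  intros eps Heps. destruct (T0 eps Heps) as [del [Hdel B]].
  exists del. split; auto. intros u Hu. specialize (B u Hu).
  rewrite Rplus_0_l, Rplus_0_r, ln_1 in B. rewrite ln_1.
  replace (ln (1 + u) - 0 - 1 * u - - / 2 * (u * u))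
    with (ln (1 + u) - 0 - 1 / 1 * u - -1 / 2 * (u * u)) by field. exact B.
Qed.

Lemma nonpos_of_quadratic_bound a K lam0 : 0 < lam0 ->
  (forall lam, 0 < lam <= lam0 -> lam * a <= lam * lam * K) -> a <= 0.
Proof.
  intros Hl H. destruct (Rle_dec a 0) as [|Ha]; auto. exfalso.
  pose proof (Rle_abs K). pose proof (Rabs_pos K).
  set (lam := Rmin lam0 (a / (Rabs K + 1))).
  assert (Hpos : 0 < lam) by (apply Rmin_pos; auto; apply Rdiv_lt_0_compat; lra).
  assert (Hlam : lam <= a / (Rabs K + 1)) by apply Rmin_r.
  specialize (H lam (conj Hpos (Rmin_l _ _))).
  assert (a <= lam * K) by (apply (Rmult_le_reg_l lam); auto; lra).
  assert (lam * (Rabs K + 1) <= a).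
  { apply (Rmult_le_compat_r (Rabs K + 1)) in Hlam; [|lra].
    replace (a / (Rabs K + 1) * (Rabs K + 1)) with a in Hlam by (field; lra). exact Hlam. }
  nra.
Qed.

Section Channel.
Variables (nx ny : nat) (P : nat -> R) (W : nat -> nat -> R).
Hypothesis W_channel : is_channel nx ny W.
Hypothesis P_distr : is_distr nx P.

Definition q (y : nat) : R := WP nx P W y.
Definition dens (x y : nat) : R := ln (W x y) - ln (q y).
Definition post (x y : nat) : R := P x * W x y / q y.

Definition Imean : R := fsum ny (fun y => fsum nx (fun x => P x * W x y * dens x y)).
Definition Isecond : R :=
  fsum ny (fun y => fsum nx (fun x => P x * W x y * (dens x y * dens x y))).
Definition pmean (y : nat) : R := fsum nx (fun x => post x y * dens x y).
Definition psecond (y : nat) : R := fsum nx (fun x => post x y * (dens x y * dens x y)).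
Definition pvar (y : nat) : R :=
  fsum nx (fun x => post x y * ((dens x y - pmean y) * (dens x y - pmean y))).

Lemma W_nonneg x y : (x < nx)%nat -> (y < ny)%nat -> 0 <= W x y.
Proof. intros Hx Hy. exact (proj1 (W_channel x Hx) y Hy). Qed.

Lemma W_sum1 x : (x < nx)%nat -> fsum ny (W x) = 1.
Proof. intros Hx. exact (proj2 (W_channel x Hx)). Qed.

Lemma P_nonneg x : (x < nx)%nat -> 0 <= P x.
Proof. exact (proj1 P_distr x). Qed.

Lemma P_sum1 : fsum nx P = 1.
Proof. exact (proj2 P_distr). Qed.

Lemma PW_nonneg x y : (x < nx)%nat -> (y < ny)%nat -> 0 <= P x * W x y.
Proof. intros. apply Rmult_le_pos; [apply P_nonneg|apply W_nonneg]; auto. Qed.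

Lemma WP_sum (Pd : nat -> R) : fsum ny (fun y => WP nx Pd W y) = fsum nx Pd.
Proof.
  unfold WP. rewrite <- fsum_swap. apply fsum_ext. intros x Hx.
  rewrite fsum_scal, W_sum1; auto; ring.
Qed.

Lemma q_sum1 : fsum ny q = 1.
Proof. unfold q. rewrite WP_sum. apply P_sum1. Qed.

Lemma q_ge x y : (x < nx)%nat -> (y < ny)%nat -> P x * W x y <= q y.
Proof.
  intros. apply (fsum_term_le nx (fun x => P x * W x y)); auto.
  intros; apply PW_nonneg; auto.
Qed.

Lemma q_nonneg y : (y < ny)%nat -> 0 <= q y.
Proof. intros. apply fsum_nonneg. intros; apply PW_nonneg; auto. Qed.

Lemma q_pos x y : (x < nx)%nat -> (y < ny)%nat -> 0 < P x -> 0 < W x y -> 0 < q y.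
Proof. intros Hx Hy HP HW. pose proof (q_ge x y Hx Hy). nra. Qed.

Lemma q_zero x y : (x < nx)%nat -> (y < ny)%nat -> q y = 0 -> P x * W x y = 0.
Proof.
  intros Hx Hy H0. apply (fsum_zero_term nx (fun x => P x * W x y)); auto.
  intros; apply PW_nonneg; auto.
Qed.

Lemma q_post_mean y f : (y < ny)%nat ->
  q y * fsum nx (fun x => post x y * f x) = fsum nx (fun x => P x * W x y * f x).
Proof.
  intros Hy. destruct (Req_dec (q y) 0) as [H0|H0].
  - rewrite H0, (fsum_ext nx (fun x => P x * W x y * f x) (fun _ => 0)), fsum_zero; [ring|].
    intros x Hx. rewrite q_zero; auto; ring.
  - rewrite <- fsum_scal. apply fsum_ext. intros x Hx. unfold post. field. auto.
Qed.

Lemma post_sum1 y : (y < ny)%nat -> 0 < q y -> fsum nx (fun x => post x y) = 1.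
Proof.
  intros Hy Hq. apply (Rmult_eq_reg_l (q y)); [|lra].
  rewrite (fsum_ext nx (fun x => post x y) (fun x => post x y * 1)) by (intros; ring).
  rewrite q_post_mean, Rmult_1_r by auto.
  apply fsum_ext; intros; ring.
Qed.

Lemma post_nonneg x y : (x < nx)%nat -> (y < ny)%nat -> 0 <= post x y.
Proof.
  intros Hx Hy. unfold post, Rdiv. apply Rmult_le_pos; [apply PW_nonneg; auto|].
  destruct (Req_dec (q y) 0) as [->|H1]; [rewrite Rinv_0; lra|].
  apply Rlt_le, Rinv_0_lt_compat. pose proof (q_nonneg y Hy). lra.
Qed.

Lemma Imean_as_pmean : Imean = fsum ny (fun y => q y * pmean y).
Proof. apply fsum_ext. intros y Hy. unfold pmean. rewrite q_post_mean; auto. Qed.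

Definition rho (s : R) : R := - s / (1 + s).
Definition tilt (y : nat) (s : R) : R := fsum nx (fun x => post x y * exp (rho s * dens x y)).

Lemma tilt_pos y s : (y < ny)%nat -> 0 < q y -> 0 < tilt y s.
Proof.
  intros Hy Hq. destruct (fsum_pos_ex _ _ Hq) as [x [Hx Hpos]].
  eapply Rlt_le_trans;
    [|apply (fsum_term_le nx (fun x => post x y * exp (rho s * dens x y)) x); auto].
  - apply Rmult_lt_0_compat; [apply Rdiv_lt_0_compat; auto|apply exp_pos].
  - intros; apply Rmult_le_pos; [apply post_nonneg; auto|apply Rlt_le, exp_pos].
Qed.

Lemma gallager_term_repr y s : (y < ny)%nat -> 0 <= s ->
  rpow (fsum nx (fun x => P x * rpow (W x y) (1 / (1 + s)))) (1 + s)
  = q y * exp ((1 + s) * ln (tilt y s)).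
Proof.
  intros Hy Hs. destruct (Req_dec (q y) 0) as [H0|H0].
  - rewrite H0, Rmult_0_l, (fsum_ext _ _ (fun _ => 0)), fsum_zero.
    { unfold rpow. destruct (Rlt_dec 0 0); [lra|auto]. }
    intros x Hx. pose proof (q_zero x y Hx Hy H0) as HPW. unfold rpow.
    destruct (Rlt_dec 0 (W x y)); [|ring].
    destruct (Rmult_integral _ _ HPW) as [->|]; [ring|lra].
  - assert (Hq : 0 < q y) by (pose proof (q_nonneg y Hy); lra).
    set (t := 1 / (1 + s)).
    assert (E : fsum nx (fun x => P x * rpow (W x y) t) = exp (t * ln (q y)) * tilt y s).
    { unfold tilt. rewrite <- fsum_scal. apply fsum_ext. intros x Hx.
      unfold rpow, post, dens. destruct (Rlt_dec 0 (W x y)) as [HW|HW].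
      + unfold Rpower.
        replace (t * ln (W x y)) with (t * ln (q y) + (ln (W x y)
          + (- ln (q y) + rho s * (ln (W x y) - ln (q y))))) by (unfold t, rho; field; lra).
        rewrite !exp_plus, exp_Ropp, !exp_ln by auto. field. lra.
      + assert (W x y = 0) by (pose proof (W_nonneg x y Hx Hy); lra).
        rewrite H. unfold Rdiv. ring. }
    rewrite E. pose proof (tilt_pos y s Hy Hq). pose proof (exp_pos (t * ln (q y))).
    unfold rpow. destruct (Rlt_dec 0 (exp (t * ln (q y)) * tilt y s)) as [Hp|Hp];
      [|exfalso; apply Hp; apply Rmult_lt_0_compat; auto].
    unfold Rpower. rewrite ln_mult, ln_exp by auto.
    replace ((1 + s) * (t * ln (q y) + ln (tilt y s)))
      with (ln (q y) + (1 + s) * ln (tilt y s)) by (unfold t; field; lra).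
    rewrite exp_plus, exp_ln; auto.
Qed.

Definition gallager_sum (s : R) : R := fsum ny (fun y => q y * exp ((1 + s) * ln (tilt y s))).

Lemma psi_repr s : 0 <= s -> psi nx ny P W s = ln (gallager_sum s).
Proof. intros Hs. unfold psi. f_equal. apply fsum_ext. intros y Hy. apply gallager_term_repr; auto. Qed.

Lemma jet_rho : jet rho 0 (-1) 1.
Proof.
  apply small_o2_cubic with 1 1; [lra|]. intros s Hs.
  replace (rho s - 0 - -1 * s - 1 * (s * s)) with (- (s * s * s) / (1 + s)) by (unfold rho; field; lra).
  unfold Rdiv. rewrite Rabs_mult, Rabs_Ropp.
  rewrite (Rabs_right (s * s * s)) by (apply Rle_ge, Rmult_le_pos; nra).
  rewrite Rabs_right by (apply Rle_ge, Rlt_le, Rinv_0_lt_compat; lra).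
  assert (/ (1 + s) <= 1) by (rewrite <- Rinv_1; apply Rinv_le_contravar; lra).
  assert (0 <= s * s * s) by (apply Rmult_le_pos; nra). nra.
Qed.

Lemma jet_tilt y : (y < ny)%nat -> 0 < q y ->
  jet (tilt y) 1 (- pmean y) (pmean y + psecond y / 2).
Proof.
  intros Hy Hq. unfold tilt.
  apply jet_coef with (fsum nx (fun x => post x y * exp 0))
    (fsum nx (fun x => post x y * (exp 0 * (dens x y * -1))))
    (fsum nx (fun x => post x y * (exp 0 * (dens x y * 1)
                                   + exp 0 / 2 * (dens x y * -1 * (dens x y * -1))))).
  - apply (jet_fsum nx (fun x s => post x y * exp (rho s * dens x y))). intros x Hx.
    apply jet_scal, (jet_comp exp (fun s => rho s * dens x y) 0 (dens x y * -1) (dens x y * 1));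
      [apply taylor2_exp|].
    apply (jet_coef _ (dens x y * 0) (dens x y * -1) (dens x y * 1)); [|ring|ring|ring].
    eapply jet_ext; [apply Rlt_0_1| |apply (jet_scal (dens x y) rho _ _ _ jet_rho)].
    intros; simpl; ring.
  - rewrite exp_0, (fsum_ext _ _ (fun x => post x y)) by (intros; ring). apply post_sum1; auto.
  - unfold pmean. rewrite (fsum_ext _ _ (fun x => -1 * (post x y * dens x y)))
      by (intros; rewrite exp_0; ring).
    rewrite fsum_scal; ring.
  - unfold pmean, psecond.
    rewrite (fsum_ext _ _ (fun x => post x y * dens x y + post x y * (dens x y * dens x y) * / 2))
      by (intros; rewrite exp_0; field).
    rewrite fsum_plus, fsum_scal_r. unfold Rdiv. ring.
Qed.

Lemma jet_gallager_term y : (y < ny)%nat ->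
  jet (fun s => q y * exp ((1 + s) * ln (tilt y s))) (q y) (q y * - pmean y) (q y * (psecond y / 2)).
Proof.
  intros Hy. destruct (Req_dec (q y) 0) as [H0|H0].
  - rewrite H0. apply (jet_coef _ 0 0 0); [|ring|ring|ring].
    eapply jet_ext; [apply Rlt_0_1| |apply jet_const]. intros; simpl; ring.
  - assert (Hq : 0 < q y) by (pose proof (q_nonneg y Hy); lra).
    apply (jet_coef _ (q y * 1) (q y * - pmean y) (q y * (psecond y / 2)));
      [apply jet_scal|ring|ring|ring].
    pose proof (jet_comp ln _ _ _ _ _ _ taylor2_ln_1 (jet_tilt y Hy Hq)) as HL.
    assert (H1s : jet (fun s => 1 + s) 1 1 0)
      by (apply (jet_coef _ (1 + 0) (0 + 1) (0 + 0)); [apply (jet_plus (fun _ => 1) (fun s => s));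
          [apply jet_const|apply jet_id]|ring|ring|ring]).
    pose proof (jet_comp exp _ _ _ _ _ _ (taylor2_exp _) (jet_mul _ _ _ _ _ _ _ _ H1s HL)) as HE.
    eapply jet_coef; [apply HE| | |]; rewrite ln_1, Rmult_0_r, exp_0; field.
Qed.

Lemma jet_psi : jet (psi nx ny P W) 0 (- Imean) ((Isecond - Imean * Imean) / 2).
Proof.
  apply jet_ext with (d0 := 1) (f := fun s => ln (gallager_sum s));
    [lra| intros s Hs; rewrite psi_repr; auto; lra|].
  assert (HT : jet gallager_sum 1 (- Imean) (Isecond / 2)).
  { eapply jet_coef; [apply (jet_fsum ny (fun y s => q y * exp ((1 + s) * ln (tilt y s))));
      intros; apply jet_gallager_term; auto| | |].
    - apply q_sum1.
    - rewrite (fsum_ext _ _ (fun y => -1 * fsum nx (fun x => P x * W x y * dens x y))).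
      + rewrite fsum_scal; unfold Imean; ring.
      + intros y Hy. unfold pmean. rewrite <- q_post_mean by auto. ring.
    - rewrite (fsum_ext _ _ (fun y => fsum nx (fun x => P x * W x y * (dens x y * dens x y)) * / 2)).
      + rewrite fsum_scal_r; unfold Isecond, Rdiv; ring.
      + intros y Hy. unfold psecond. rewrite <- q_post_mean by auto. field. }
  eapply jet_coef; [apply (jet_comp ln _ _ _ _ _ _ taylor2_ln_1 HT)| | |];
    [apply ln_1|ring|field].
Qed.

Lemma exp_quadratic_lower M u : 0 <= M -> - M <= u -> 1 + u + u * u / (4 + 2 * M) <= exp u.
Proof.
  intros HM Hu. destruct (Rle_dec (-2) u) as [H2|H2].
  - assert (E : exp u = exp (u / 2) * exp (u / 2)) by (rewrite <- exp_plus; f_equal; field).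
    pose proof (exp_ineq1_le (u / 2)).
    assert ((1 + u / 2) * (1 + u / 2) <= exp (u / 2) * exp (u / 2)) by (apply Rmult_le_compat; lra).
    assert (u * u / (4 + 2 * M) <= u * u / 4)
      by (unfold Rdiv; apply Rmult_le_compat_l; [nra|apply Rinv_le_contravar; lra]).
    nra.
  - pose proof (exp_pos u). assert (u * u <= M * (- u)) by nra.
    assert (u * u / (4 + 2 * M) <= M * (- u) / (4 + 2 * M))
      by (unfold Rdiv; apply Rmult_le_compat_r; [apply Rlt_le, Rinv_0_lt_compat|]; lra).
    assert (M * (- u) / (4 + 2 * M) <= - u / 2).
    { apply (Rmult_le_reg_r (4 + 2 * M)); [lra|].
      unfold Rdiv. rewrite Rmult_assoc, Rinv_l by lra. nra. }
    lra.
Qed.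

Lemma scaled_difference_bound r a b B :
  Rabs r <= 1 -> Rabs a <= B -> Rabs b <= B -> - (2 * B) <= r * (a - b).
Proof.
  intros Hr Ha Hb. assert (Hab : Rabs (a - b) <= 2 * B)
    by (unfold Rminus; eapply Rle_trans; [apply Rabs_triang|]; rewrite Rabs_Ropp; lra).
  assert (Rabs (r * (a - b)) <= 2 * B)
    by (rewrite Rabs_mult; pose proof (Rabs_pos r); pose proof (Rabs_pos (a - b)); nra).
  pose proof (Rle_abs (- (r * (a - b)))). rewrite Rabs_Ropp in H0. lra.
Qed.

Definition dbound : R := fsum ny (fun y => fsum nx (fun x => Rabs (dens x y))).
Definition kappa : R := / (4 + 2 * (2 * dbound)).
Definition theta : R := exp (- (2 * dbound)).
Definition curv : R := kappa * theta / 4.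

Lemma dbound_nonneg : 0 <= dbound.
Proof. apply fsum_nonneg; intros; apply fsum_nonneg; intros; apply Rabs_pos. Qed.

Lemma kappa_pos : 0 < kappa.
Proof. pose proof dbound_nonneg. apply Rinv_0_lt_compat; lra. Qed.

Lemma theta_range : 0 < theta <= 1.
Proof.
  pose proof dbound_nonneg. split; [apply exp_pos|].
  rewrite <- exp_0. apply exp_le. lra.
Qed.

Lemma curv_pos : 0 < curv.
Proof. unfold curv. pose proof kappa_pos. pose proof theta_range. apply Rdiv_lt_0_compat; nra. Qed.

Lemma dens_le_dbound x y : (x < nx)%nat -> (y < ny)%nat -> Rabs (dens x y) <= dbound.
Proof.
  intros Hx Hy.
  eapply Rle_trans; [|apply (fsum_term_le ny (fun y => fsum nx (fun x => Rabs (dens x y))) y); auto].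
  - apply (fsum_term_le nx (fun x => Rabs (dens x y))); auto. intros; apply Rabs_pos.
  - intros; apply fsum_nonneg; intros; apply Rabs_pos.
Qed.

Lemma pmean_le_dbound y : (y < ny)%nat -> 0 < q y -> Rabs (pmean y) <= dbound.
Proof.
  intros Hy Hq. eapply Rle_trans; [apply fsum_abs|].
  apply Rle_trans with (fsum nx (fun x => post x y * dbound)).
  - apply fsum_le. intros x Hx.
    rewrite Rabs_mult, (Rabs_right (post x y)) by (apply Rle_ge, post_nonneg; auto).
    apply Rmult_le_compat_l; [apply post_nonneg; auto|apply dens_le_dbound; auto].
  - rewrite fsum_scal_r, post_sum1; auto; lra.
Qed.

Lemma Imean_le_dbound : Rabs Imean <= dbound.
Proof.
  rewrite Imean_as_pmean. eapply Rle_trans; [apply fsum_abs|].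
  apply Rle_trans with (fsum ny (fun y => q y * dbound)).
  - apply fsum_le. intros y Hy. pose proof (q_nonneg y Hy).
    rewrite Rabs_mult, (Rabs_right (q y)) by lra.
    destruct (Req_dec (q y) 0) as [->|H0]; [lra|].
    apply Rmult_le_compat_l; [lra|apply pmean_le_dbound; auto; lra].
  - rewrite fsum_scal_r, q_sum1; lra.
Qed.

Lemma rho_range s : 0 <= s -> -1 <= rho s <= 0.
Proof.
  intros Hs. unfold rho. split.
  - apply (Rmult_le_reg_r (1 + s)); [lra|]. unfold Rdiv. rewrite Rmult_assoc, Rinv_l by lra. lra.
  - unfold Rdiv. assert (0 < / (1 + s)) by (apply Rinv_0_lt_compat; lra). nra.
Qed.

Lemma rho_sq_lower s : 0 <= s <= 1 -> s * s / 4 <= rho s * rho s.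
Proof.
  intros Hs. unfold rho.
  replace (- s / (1 + s) * (- s / (1 + s))) with (s * s / ((1 + s) * (1 + s))) by (field; lra).
  unfold Rdiv. apply Rmult_le_compat_l; [nra|]. apply Rinv_le_contravar; nra.
Qed.

Lemma pvar_nonneg y : (y < ny)%nat -> 0 <= pvar y.
Proof. intros. apply fsum_nonneg. intros. apply Rmult_le_pos; [apply post_nonneg; auto|apply Rle_0_sqr]. Qed.

(* X_y(s) >= exp(rho pmean) (1 + kappa rho^2 pvar), termwise from exp_quadratic_lower. *)
Lemma tilt_lower y s : (y < ny)%nat -> 0 < q y -> 0 <= s <= 1 ->
  exp (rho s * pmean y) * (1 + kappa * (rho s * rho s) * pvar y) <= tilt y s.
Proof.
  intros Hy Hq Hs. pose proof (rho_range s ltac:(lra)) as Hr. pose proof dbound_nonneg.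
  apply Rle_trans with (fsum nx (fun x => exp (rho s * pmean y) * (post x y *
    (1 + rho s * (dens x y - pmean y)
     + kappa * ((rho s * (dens x y - pmean y)) * (rho s * (dens x y - pmean y))))))).
  - right. rewrite fsum_scal. f_equal.
    rewrite (fsum_ext _ _ (fun x => (post x y + rho s * (post x y * dens x y))
        + (- (rho s * pmean y)) * post x y
        + (kappa * (rho s * rho s)) * (post x y * ((dens x y - pmean y) * (dens x y - pmean y)))))
      by (intros; ring).
    rewrite !fsum_plus, !fsum_scal, post_sum1 by auto. fold (pmean y) (pvar y). ring.
  - apply fsum_le. intros x Hx. set (u := rho s * (dens x y - pmean y)).
    assert (Hu : - (2 * dbound) <= u).
    { apply scaled_difference_bound;
        [apply Rabs_le; lra|apply dens_le_dbound|apply pmean_le_dbound]; auto. }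
    pose proof (exp_quadratic_lower (2 * dbound) u ltac:(lra) Hu) as He.
    replace (u * u / (4 + 2 * (2 * dbound))) with (kappa * (u * u)) in He
      by (unfold kappa; field; lra).
    replace (exp (rho s * dens x y)) with (exp (rho s * pmean y) * exp u)
      by (unfold u; rewrite <- exp_plus; f_equal; ring).
    pose proof (exp_pos (rho s * pmean y)). pose proof (post_nonneg x y Hx Hy).
    assert (post x y * (1 + u + kappa * (u * u)) <= post x y * exp u)
      by (apply Rmult_le_compat_l; lra). nra.
Qed.

(* Raising to the power 1+s:  W_P(y) X_y(s)^(1+s) >= W_P(y) e^{-s pmean} (1 + kappa rho^2 pvar). *)
Lemma gallager_term_lower y s : (y < ny)%nat -> 0 <= s <= 1 ->
  q y * (exp (- s * pmean y) * (1 + kappa * (rho s * rho s) * pvar y))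
  <= q y * exp ((1 + s) * ln (tilt y s)).
Proof.
  intros Hy Hs. destruct (Req_dec (q y) 0) as [->|H0]; [lra|].
  assert (Hq : 0 < q y) by (pose proof (q_nonneg y Hy); lra).
  apply Rmult_le_compat_l; [lra|].
  set (z := kappa * (rho s * rho s) * pvar y).
  assert (Hz : 0 <= z) by (unfold z; pose proof kappa_pos; pose proof (pvar_nonneg y Hy);
    apply Rmult_le_pos; [apply Rmult_le_pos|]; nra).
  pose proof (tilt_lower y s Hy Hq Hs) as HX. fold z in HX.
  assert (H1 : rho s * pmean y + ln (1 + z) <= ln (tilt y s)).
  { rewrite <- (ln_exp (rho s * pmean y)), <- ln_mult by (try apply exp_pos; lra).
    apply ln_le; auto. apply Rmult_lt_0_compat; [apply exp_pos|lra]. }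
  assert (H2 : 0 <= ln (1 + z)) by (rewrite <- ln_1; apply ln_le; lra).
  assert (H3 : - s * pmean y + ln (1 + z) <= (1 + s) * ln (tilt y s)).
  { replace (- s * pmean y) with ((1 + s) * (rho s * pmean y)) by (unfold rho; field; lra).
    assert ((1 + s) * (rho s * pmean y + ln (1 + z)) <= (1 + s) * ln (tilt y s))
      by (apply Rmult_le_compat_l; lra). nra. }
  apply exp_le in H3. rewrite exp_plus, exp_ln in H3 by lra. exact H3.
Qed.

(* Recentring the exponent at I = Imean, again with exp_quadratic_lower. *)
Lemma gallager_term_lower_centered y s : (y < ny)%nat -> 0 <= s <= 1 ->
  exp (- s * Imean) * (q y + (- s) * (q y * pmean y - Imean * q y)
      + kappa * (s * s) * (q y * ((pmean y - Imean) * (pmean y - Imean)))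
      + theta * kappa * (rho s * rho s) * (q y * pvar y))
  <= q y * exp ((1 + s) * ln (tilt y s)).
Proof.
  intros Hy Hs. eapply Rle_trans; [|apply gallager_term_lower; auto].
  destruct (Req_dec (q y) 0) as [->|H0]; [right; ring|].
  assert (Hq : 0 < q y) by (pose proof (q_nonneg y Hy); lra).
  pose proof dbound_nonneg. pose proof theta_range.
  set (w := - s * (pmean y - Imean)).
  assert (Hw : - (2 * dbound) <= w).
  { apply scaled_difference_bound;
      [rewrite Rabs_Ropp; apply Rabs_le; lra|apply pmean_le_dbound|apply Imean_le_dbound]; auto. }
  pose proof (exp_quadratic_lower (2 * dbound) w ltac:(lra) Hw) as Ew.
  replace (w * w / (4 + 2 * (2 * dbound))) with (kappa * (w * w)) in Ew
    by (unfold kappa; field; lra).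
  assert (Eth : theta <= exp w) by (apply exp_le; lra).
  replace (exp (- s * pmean y)) with (exp (- s * Imean) * exp w)
    by (unfold w; rewrite <- exp_plus; f_equal; ring).
  set (z := kappa * (rho s * rho s) * pvar y).
  assert (Hz : 0 <= z) by (unfold z; pose proof kappa_pos; pose proof (pvar_nonneg y Hy);
    apply Rmult_le_pos; [apply Rmult_le_pos|]; nra).
  pose proof (exp_pos (- s * Imean)).
  replace (exp (- s * Imean) * (q y + - s * (q y * pmean y - Imean * q y)
      + kappa * (s * s) * (q y * ((pmean y - Imean) * (pmean y - Imean)))
      + theta * kappa * (rho s * rho s) * (q y * pvar y)))
    with (exp (- s * Imean) * q y * ((1 + w + kappa * (w * w)) + theta * z)) by (unfold w, z; ring).
  replace (q y * (exp (- s * Imean) * exp w * (1 + z)))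
    with (exp (- s * Imean) * q y * (exp w + exp w * z)) by ring.
  apply Rmult_le_compat_l; [nra|].
  assert (theta * z <= exp w * z) by (apply Rmult_le_compat_r; lra). lra.
Qed.

Lemma total_variance :
  fsum ny (fun y => q y * ((pmean y - Imean) * (pmean y - Imean))) + fsum ny (fun y => q y * pvar y)
  = Isecond - Imean * Imean.
Proof.
  rewrite <- fsum_plus.
  rewrite (fsum_ext _ _ (fun y => fsum nx (fun x => P x * W x y * (dens x y * dens x y))
            + (-2 * Imean) * (q y * pmean y) + (Imean * Imean) * q y)).
  - rewrite !fsum_plus, !fsum_scal, <- Imean_as_pmean, q_sum1. unfold Isecond. ring.
  - intros y Hy. rewrite <- q_post_mean by auto. fold (psecond y).
    destruct (Req_dec (q y) 0) as [->|H0]; [ring|].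
    assert (Hq : 0 < q y) by (pose proof (q_nonneg y Hy); lra).
    assert (E : pvar y = psecond y - pmean y * pmean y).
    { unfold pvar. rewrite (fsum_ext _ _ (fun x => post x y * (dens x y * dens x y)
          + (-2 * pmean y) * (post x y * dens x y) + (pmean y * pmean y) * post x y)) by (intros; ring).
      rewrite !fsum_plus, !fsum_scal, post_sum1 by auto. fold (psecond y) (pmean y). ring. }
    rewrite E. ring.
Qed.

Lemma between_variance_nonneg :
  0 <= fsum ny (fun y => q y * ((pmean y - Imean) * (pmean y - Imean))).
Proof. apply fsum_nonneg. intros. apply Rmult_le_pos; [apply q_nonneg; auto|apply Rle_0_sqr]. Qed.

Lemma within_variance_nonneg : 0 <= fsum ny (fun y => q y * pvar y).
Proof. apply fsum_nonneg. intros. apply Rmult_le_pos; [apply q_nonneg; auto|apply pvar_nonneg; auto]. Qed.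

Lemma variance_nonneg : 0 <= Isecond - Imean * Imean.
Proof. rewrite <- total_variance. pose proof between_variance_nonneg. pose proof within_variance_nonneg. lra. Qed.

Lemma gallager_sum_lower s : 0 <= s <= 1 ->
  exp (- s * Imean) * (1 + curv * (s * s) * (Isecond - Imean * Imean)) <= gallager_sum s.
Proof.
  intros Hs. eapply Rle_trans;
    [|apply fsum_le; intros y Hy; apply gallager_term_lower_centered; auto].
  rewrite fsum_scal. apply Rmult_le_compat_l; [apply Rlt_le, exp_pos|].
  rewrite !fsum_plus, !fsum_scal, fsum_minus, (fsum_scal ny Imean q), <- Imean_as_pmean, q_sum1,
    <- total_variance.
  pose proof between_variance_nonneg as HA. pose proof within_variance_nonneg as HB.
  set (A := fsum ny (fun y => q y * ((pmean y - Imean) * (pmean y - Imean)))) in *.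
  set (B := fsum ny (fun y => q y * pvar y)) in *.
  pose proof (rho_sq_lower s Hs). pose proof kappa_pos. pose proof theta_range. unfold curv.
  assert (kappa * theta / 4 * (s * s) * A <= kappa * (s * s) * A).
  { assert (0 <= kappa * (s * s * A)) by (apply Rmult_le_pos; [lra|apply Rmult_le_pos; nra]).
    replace (kappa * theta / 4 * (s * s) * A) with ((kappa * (s * s * A)) * (theta / 4)) by field.
    replace (kappa * (s * s) * A) with ((kappa * (s * s * A)) * 1) by ring.
    apply Rmult_le_compat_l; lra. }
  assert (kappa * theta / 4 * (s * s) * B <= theta * kappa * (rho s * rho s) * B).
  { assert (0 <= kappa * theta * B) by (apply Rmult_le_pos; [apply Rmult_le_pos|]; lra).
    replace (kappa * theta / 4 * (s * s) * B) with ((kappa * theta * B) * (s * s / 4)) by field.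
    replace (theta * kappa * (rho s * rho s) * B) with ((kappa * theta * B) * (rho s * rho s)) by ring.
    apply Rmult_le_compat_l; lra. }
  lra.
Qed.

Lemma psi_lower s : 0 <= s <= 1 ->
  ln (1 + curv * (s * s) * (Isecond - Imean * Imean)) <= Imean * s + psi nx ny P W s.
Proof.
  intros Hs. rewrite psi_repr by lra. pose proof (gallager_sum_lower s Hs) as H.
  assert (0 <= curv * (s * s) * (Isecond - Imean * Imean))
    by (pose proof curv_pos; pose proof variance_nonneg;
        apply Rmult_le_pos; [apply Rmult_le_pos|]; nra).
  apply ln_le in H; [|apply Rmult_lt_0_compat; [apply exp_pos|lra]].
  rewrite ln_mult, ln_exp in H by (try apply exp_pos; lra). lra.
Qed.

Definition Dinfo (x : nat) : R := fsum ny (fun y => W x y * dens x y).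

Lemma Dx_eq_Dinfo x : (x < nx)%nat -> 0 < P x -> Defs.Dx nx ny P W x = Dinfo x.
Proof.
  intros Hx HP. apply fsum_ext. intros y Hy. destruct (Rlt_dec 0 (W x y)) as [HW|HW].
  - rewrite ln_div by (auto; apply (q_pos x y); auto). reflexivity.
  - assert (W x y = 0) by (pose proof (W_nonneg x y Hx Hy); lra). rewrite H; ring.
Qed.

Lemma sum_P_Dinfo : fsum nx (fun x => P x * Dinfo x) = Imean.
Proof.
  unfold Dinfo, Imean. rewrite <- fsum_swap. apply fsum_ext. intros x Hx.
  rewrite <- fsum_scal. apply fsum_ext; intros; ring.
Qed.

(* The convention "0 * D = 0" in MI is harmless for nonnegative weights. *)
Lemma MI_expand (Pd : nat -> R) : (forall i, (i < nx)%nat -> 0 <= Pd i) ->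
  MI nx ny Pd W = fsum nx (fun x => Pd x * Defs.Dx nx ny Pd W x).
Proof.
  intros H. apply fsum_ext. intros x Hx. destruct (Rlt_dec 0 (Pd x)); auto.
  assert (Pd x = 0) by (pose proof (H x Hx); lra). rewrite H0; ring.
Qed.

Lemma MI_eq_Imean : MI nx ny P W = Imean.
Proof.
  rewrite MI_expand by exact P_nonneg. rewrite <- sum_P_Dinfo. apply fsum_ext. intros x Hx.
  destruct (Req_dec (P x) 0) as [->|HP]; [ring|].
  rewrite Dx_eq_Dinfo; auto. pose proof (P_nonneg x Hx). lra.
Qed.

(* a ln(a/b) <= (a-b)^2/b + (a-b), from ln t <= t - 1. *)
Lemma log_ratio_bound a b : 0 <= a -> 0 <= b -> (b = 0 -> a = 0) ->
  a * (ln a - ln b) <= (a - b) * (a - b) / b + (a - b).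
Proof.
  intros Ha Hb Hab. destruct (Req_dec b 0) as [Hb0|Hb0].
  - rewrite Hab, Hb0 by auto. unfold Rdiv. right. ring.
  - destruct (Req_dec a 0) as [Ha0|Ha0]; [rewrite Ha0; right; field; auto|].
    rewrite <- ln_div by lra. pose proof (exp_ineq1_le (ln (a / b))) as Hl.
    rewrite exp_ln in Hl by (apply Rdiv_lt_0_compat; lra).
    replace ((a - b) * (a - b) / b + (a - b)) with (a * (a / b - 1)) by (field; auto).
    apply Rmult_le_compat_l; lra.
Qed.

Lemma MI_cross_form (Qd : nat -> R) (M : R) : (forall z, (z < nx)%nat -> 0 <= Qd z) ->
  (forall z, (z < nx)%nat -> Qd z <= M * P z) ->
  MI nx ny Qd W = fsum nx (fun z => Qd z * Dinfo z)
    - fsum ny (fun y => WP nx Qd W y * (ln (WP nx Qd W y) - ln (q y))).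
Proof.
  intros Hnn Hle. rewrite MI_expand by auto.
  set (lr := fun y => ln (WP nx Qd W y) - ln (q y)).
  rewrite (fsum_ext _ _ (fun z => Qd z * Dinfo z - Qd z * fsum ny (fun y => W z y * lr y))).
  - rewrite fsum_minus. f_equal.
    rewrite (fsum_ext _ _ (fun z => fsum ny (fun y => Qd z * W z y * lr y)))
      by (intros; rewrite <- fsum_scal; apply fsum_ext; intros; ring).
    rewrite fsum_swap. apply fsum_ext. intros y Hy. rewrite fsum_scal_r. reflexivity.
  - intros z Hz. destruct (Req_dec (Qd z) 0) as [->|H0]; [ring|].
    assert (HQz : 0 < Qd z) by (pose proof (Hnn z Hz); lra).
    assert (HPz : 0 < P z) by (pose proof (P_nonneg z Hz); pose proof (Hle z Hz);
      destruct (Req_dec (P z) 0) as [E|]; [rewrite E in *|]; nra).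
    rewrite <- Rmult_minus_distr_l. f_equal. unfold Defs.Dx, Dinfo. rewrite <- fsum_minus.
    apply fsum_ext. intros y Hy. destruct (Rlt_dec 0 (W z y)) as [HW|HW].
    + assert (0 < WP nx Qd W y).
      { eapply Rlt_le_trans; [|apply (fsum_term_le nx (fun z => Qd z * W z y) z); auto].
        - nra.
        - intros; apply Rmult_le_pos; [auto|apply W_nonneg; auto]. }
      rewrite ln_div by auto. unfold lr, dens. ring.
    + assert (W z y = 0) by (pose proof (W_nonneg z y Hz Hy); lra). rewrite H; ring.
Qed.

Lemma MI_lower_chi2 (Qd : nat -> R) (M : R) : 0 <= M -> (forall z, (z < nx)%nat -> 0 <= Qd z) ->
  (forall z, (z < nx)%nat -> Qd z <= M * P z) -> fsum nx Qd = 1 ->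
  fsum nx (fun z => Qd z * Dinfo z)
    - fsum ny (fun y => (WP nx Qd W y - q y) * (WP nx Qd W y - q y) / q y)
  <= MI nx ny Qd W.
Proof.
  intros HM Hnn Hle Hs. rewrite (MI_cross_form Qd M Hnn Hle).
  set (WQ := fun y => WP nx Qd W y).
  assert (WQ_nonneg : forall y, (y < ny)%nat -> 0 <= WQ y)
    by (intros; apply fsum_nonneg; intros; apply Rmult_le_pos; [auto|apply W_nonneg; auto]).
  enough (fsum ny (fun y => WQ y * (ln (WQ y) - ln (q y)))
          <= fsum ny (fun y => (WQ y - q y) * (WQ y - q y) / q y)) by (unfold WQ in *; lra).
  apply Rle_trans with (fsum ny (fun y => (WQ y - q y) * (WQ y - q y) / q y + (WQ y - q y))).
  - apply fsum_le. intros y Hy. apply log_ratio_bound; [auto|apply q_nonneg; auto|].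
    intros Hq0. assert (WQ y <= M * q y).
    { unfold WQ, WP, q, WP. rewrite <- fsum_scal. apply fsum_le. intros z Hz.
      replace (M * (P z * W z y)) with ((M * P z) * W z y) by ring.
      apply Rmult_le_compat_r; [apply W_nonneg|apply Hle]; auto. }
    pose proof (WQ_nonneg y Hy). rewrite Hq0 in H. lra.
  - rewrite fsum_plus, fsum_minus. unfold WQ. rewrite WP_sum, q_sum1, Hs. lra.
Qed.

Section Optimal.
Variable C : R.
Hypothesis P_capacity : is_capacity nx ny W C.
Hypothesis P_achieves : MI nx ny P W = C.

Lemma directional_derivative_nonpos (d : nat -> R) (lam0 M : R) : 0 < lam0 -> 0 <= M ->
  fsum nx d = 0 ->
  (forall lam, 0 < lam <= lam0 -> forall z, (z < nx)%nat ->
     0 <= P z + lam * d z /\ P z + lam * d z <= M * P z) ->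
  fsum nx (fun z => d z * Dinfo z) <= 0.
Proof.
  intros Hl0 HM Hd0 Hcond.
  set (Wd := fun y => fsum nx (fun z => d z * W z y)).
  apply (nonpos_of_quadratic_bound _ (fsum ny (fun y => Wd y * Wd y / q y)) lam0); auto.
  intros lam Hlam. set (Qd := fun z => P z + lam * d z).
  assert (Hsum : fsum nx Qd = 1) by (unfold Qd; rewrite fsum_plus, fsum_scal, Hd0, P_sum1; ring).
  assert (Hup : MI nx ny Qd W <= C).
  { apply (proj1 P_capacity). exists Qd. split; auto. split; auto. apply (Hcond lam Hlam). }
  pose proof (MI_lower_chi2 Qd M HM (fun z Hz => proj1 (Hcond lam Hlam z Hz))
                (fun z Hz => proj2 (Hcond lam Hlam z Hz)) Hsum) as HK.
  assert (E1 : fsum nx (fun z => Qd z * Dinfo z) = Imean + lam * fsum nx (fun z => d z * Dinfo z)).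
  { unfold Qd. rewrite (fsum_ext _ _ (fun z => P z * Dinfo z + lam * (d z * Dinfo z))) by (intros; ring).
    rewrite fsum_plus, fsum_scal, sum_P_Dinfo. ring. }
  assert (E2 : fsum ny (fun y => (WP nx Qd W y - q y) * (WP nx Qd W y - q y) / q y)
               = lam * lam * fsum ny (fun y => Wd y * Wd y / q y)).
  { rewrite <- fsum_scal. apply fsum_ext. intros y Hy.
    replace (WP nx Qd W y - q y) with (lam * Wd y)
      by (unfold WP, Qd, q, WP, Wd; rewrite <- fsum_scal, <- fsum_minus; apply fsum_ext; intros; ring).
    unfold Rdiv. ring. }
  rewrite E1, E2 in HK. rewrite MI_eq_Imean in P_achieves. lra.
Qed.

Lemma Dinfo_on_support x : (x < nx)%nat -> 0 < P x -> Dinfo x = Imean.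
Proof.
  intros Hx HPx. pose proof (Rinv_0_lt_compat _ HPx).
  assert (Hd0 : fsum nx (fun z => kdelta x z - P z) = 0).
  { rewrite fsum_minus, P_sum1, (fsum_ext _ _ (fun z => kdelta x z * 1)), fsum_kdelta by (auto; intros; ring).
    ring. }
  assert (Hkd : forall z, (kdelta x z = 0 /\ z <> x) \/ (kdelta x z = 1 /\ z = x))
    by (intros z; unfold kdelta; destruct (Nat.eq_dec z x); auto).
  assert (HPle : P x <= 1) by (rewrite <- P_sum1; apply fsum_term_le; auto; apply P_nonneg).
  (* towards the point mass at x, and away from it *)
  assert (H1 : fsum nx (fun z => (kdelta x z - P z) * Dinfo z) <= 0).
  { apply (directional_derivative_nonpos _ 1 (1 + / P x)); auto; [lra|lra|].
    intros lam Hlam z Hz. pose proof (P_nonneg z Hz).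
    destruct (Hkd z) as [[E Hne]|[E ->]]; rewrite E; split; try nra.
    replace ((1 + / P x) * P x) with (P x + 1) by (field; lra). nra. }
  assert (H2 : fsum nx (fun z => (P z - kdelta x z) * Dinfo z) <= 0).
  { apply (directional_derivative_nonpos _ (P x) 2); auto; [lra| |].
    - rewrite fsum_minus. rewrite fsum_minus in Hd0. lra.
    - intros lam Hlam z Hz. pose proof (P_nonneg z Hz).
      destruct (Hkd z) as [[E _]|[E ->]]; rewrite E; split; nra. }
  rewrite (fsum_ext _ _ (fun z => kdelta x z * Dinfo z - P z * Dinfo z)) in H1 by (intros; ring).
  rewrite (fsum_ext _ _ (fun z => P z * Dinfo z - kdelta x z * Dinfo z)) in H2 by (intros; ring).
  rewrite fsum_minus, fsum_kdelta, sum_P_Dinfo in H1, H2 by auto. lra.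
Qed.

Lemma Vdisp_eq_variance : Vdisp nx ny P W = Isecond - Imean * Imean.
Proof.
  unfold Vdisp.
  rewrite (fsum_ext _ _ (fun x => fsum ny (fun y => P x * W x y * (dens x y * dens x y))
      + (-2 * Imean) * fsum ny (fun y => P x * W x y * dens x y)
      + (Imean * Imean) * fsum ny (fun y => P x * W x y))).
  - rewrite !fsum_plus, !fsum_scal, !(fsum_swap nx ny). fold Isecond Imean.
    change (fun j => fsum nx (fun i => P i * W i j)) with q. rewrite q_sum1. ring.
  - intros x Hx. destruct (Rlt_dec 0 (P x)) as [HP|HP].
    + rewrite Dx_eq_Dinfo, Dinfo_on_support by auto.
      rewrite <- !fsum_scal, <- !fsum_plus. apply fsum_ext. intros y Hy.
      destruct (Rlt_dec 0 (W x y)) as [HW|HW].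
      * rewrite ln_div by (auto; apply (q_pos x y); auto). fold (q y). unfold dens. ring.
      * assert (W x y = 0) by (pose proof (W_nonneg x y Hx Hy); lra). rewrite H; ring.
    + assert (E : P x = 0) by (pose proof (P_nonneg x Hx); lra).
      rewrite E, (fsum_ext ny (fun y => 0 * W x y * (dens x y * dens x y)) (fun _ => 0)),
        (fsum_ext ny (fun y => 0 * W x y * dens x y) (fun _ => 0)),
        (fsum_ext ny (fun y => 0 * W x y) (fun _ => 0)), fsum_zero by (intros; ring). ring.
Qed.

End Optimal.
End Channel.

Lemma sqrt_INR_eventually_gt K : exists N, forall n, (N <= n)%nat -> K < sqrt (INR n).
Proof.
  pose proof (Rmax_l K 0). pose proof (Rmax_r K 0). set (k := Rmax K 0) in *.
  destruct (INR_unbounded (k * k)) as [N HN]. exists N. intros n Hn.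
  assert (k * k < INR n) by (apply Rlt_le_trans with (INR N); [lra|apply le_INR; lia]).
  apply Rle_lt_trans with k; [lra|].
  rewrite <- (sqrt_square k) by lra. apply sqrt_lt_1; nra.
Qed.

Lemma quadratic_min_bound A B t : 0 < A -> - (B * B) / (4 * A) <= A * (t * t) + B * t.
Proof.
  intros HA. apply (Rmult_le_reg_r (4 * A)); [lra|].
  replace (- (B * B) / (4 * A) * (4 * A)) with (- (B * B)) by (field; lra).
  assert (0 <= (2 * A * t + B) * (2 * A * t + B)) by apply Rle_0_sqr. nra.
Qed.

Lemma quadratic_min_perturbation V B e :
  0 < V -> 0 <= e <= V / 4 ->
  - (B * B) / (2 * V) - 2 * (B * B) * e / (V * V) <= - (B * B) / (4 * (V / 2 - e)).
Proof.
  intros HV He.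
  assert (E : B * B / (4 * (V / 2 - e)) - B * B / (2 * V) = B * B * e / (2 * (V / 2 - e) * V))
    by (field; lra).
  assert (B * B * e / (2 * (V / 2 - e) * V) <= B * B * e / (2 * (V / 4) * V)).
  { unfold Rdiv. apply Rmult_le_compat_l; [pose proof (Rle_0_sqr B); unfold Rsqr in *; nra|].
    apply Rinv_le_contravar; nra. }
  replace (B * B * e / (2 * (V / 4) * V)) with (2 * (B * B) * e / (V * V)) in H by (field; lra).
  unfold Rdiv in *. lra.
Qed.

Lemma is_min_on_ext f1 f2 a b m :
  (forall s, f1 s = f2 s) -> is_min_on f1 a b m -> is_min_on f2 a b m.
Proof.
  intros H [[s [Hs E]] Hmin]. split.
  - exists s. rewrite <- H. auto.
  - intros s' Hs'. rewrite <- H. auto.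
Qed.

Section ScaledMinimum.
Variables (g : R -> R) (V R2 k : R) (m : nat -> R).
Hypothesis V_pos : 0 < V.
Hypothesis R2_neg : R2 < 0.
Hypothesis k_pos : 0 < k.
Hypothesis g_jet : jet g 0 0 (V / 2).
Hypothesis g_lower : forall s, 0 <= s <= 1 -> ln (1 + k * (s * s) * V) <= g s.
Hypothesis m_min : forall n, (0 < n)%nat ->
  is_min_on (fun s => g s + R2 / sqrt (INR n) * s) 0 1 (m n).

(* Upper bound: evaluate at s = c / sqrt n with c = -R2/V. *)
Lemma scaled_minimum_upper eps : 0 < eps ->
  exists N, forall n, (N <= n)%nat -> INR n * m n <= - (R2 * R2) / (2 * V) + eps.
Proof.
  intros Heps. set (c := - R2 / V). assert (Hc : 0 < c) by (apply Rdiv_lt_0_compat; lra).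
  destruct (g_jet (eps / (c * c))) as [del [Hdel Bg]]; [apply Rdiv_lt_0_compat; nra|].
  assert (Hd : 0 < Rmin del 1) by (apply Rmin_pos; lra).
  pose proof (Rmin_l del 1). pose proof (Rmin_r del 1). set (d := Rmin del 1) in *.
  destruct (sqrt_INR_eventually_gt (c / d)) as [N HN]. exists (S N). intros n Hn.
  set (sq := sqrt (INR n)). assert (Hsq : c / d < sq) by (apply HN; lia).
  assert (Hsq2 : sq * sq = INR n) by (apply sqrt_sqrt, pos_INR).
  assert (Hcd : 0 < c / d) by (apply Rdiv_lt_0_compat; lra).
  set (h := c / sq). assert (Hh : 0 < h) by (apply Rdiv_lt_0_compat; lra).
  assert (Hhd : h < d).
  { unfold h. apply (Rmult_lt_reg_r sq); [lra|]. unfold Rdiv. rewrite Rmult_assoc, Rinv_l by lra.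
    apply (Rmult_lt_compat_r d) in Hsq; [|lra]. unfold Rdiv in Hsq.
    rewrite Rmult_assoc, Rinv_l in Hsq by lra. lra. }
  destruct (m_min n ltac:(lia)) as [_ Hall]. specialize (Hall h ltac:(lra)).
  specialize (Bg h ltac:(lra)). pose proof (Rle_abs (g h - 0 - 0 * h - V / 2 * (h * h))).
  assert (Hm : m n <= (V / 2 + eps / (c * c)) * (h * h) + R2 / sq * h) by (fold sq in Hall; lra).
  apply (Rmult_le_compat_l (INR n)) in Hm; [|apply pos_INR].
  replace (INR n * ((V / 2 + eps / (c * c)) * (h * h) + R2 / sq * h))
    with (- (R2 * R2) / (2 * V) + eps) in Hm
    by (rewrite <- Hsq2; unfold h, c; field; repeat split; lra).
  exact Hm.
Qed.

Lemma scaled_value_near_zero e s sq : 0 <= e <= V / 4 -> 0 < sq ->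
  (V / 2 - e) * (s * s) <= g s ->
  - (R2 * R2) / (2 * V) - 2 * (R2 * R2) * e / (V * V) <= sq * sq * (g s + R2 / sq * s).
Proof.
  intros He Hsq Hg.
  apply Rle_trans with ((V / 2 - e) * ((sq * s) * (sq * s)) + R2 * (sq * s)).
  - eapply Rle_trans; [apply (quadratic_min_perturbation V R2 e); lra|].
    apply quadratic_min_bound. lra.
  - replace ((V / 2 - e) * ((sq * s) * (sq * s)) + R2 * (sq * s))
      with (sq * sq * ((V / 2 - e) * (s * s) + R2 / sq * s)) by (field; lra).
    apply Rmult_le_compat_l; nra.
Qed.

Lemma scaled_value_far eta s sq : 0 < eta -> eta <= g s -> 0 <= s <= 1 -> - R2 / eta < sq ->
  0 <= sq * sq * (g s + R2 / sq * s).
Proof.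
  intros Heta Hg Hs Hsq. assert (0 < - R2 / eta) by (apply Rdiv_lt_0_compat; lra).
  assert (Hslope : - eta < R2 / sq).
  { apply (Rmult_lt_reg_r sq); [lra|]. unfold Rdiv. rewrite Rmult_assoc, Rinv_l by lra.
    apply (Rmult_lt_compat_r eta) in Hsq; [|lra]. unfold Rdiv in Hsq.
    rewrite Rmult_assoc, Rinv_l in Hsq by lra. lra. }
  assert (R2 / sq < 0) by (apply Rdiv_neg_pos; lra).
  apply Rmult_le_pos; nra.
Qed.

(* Lower bound: split [0,1] at a point d where the expansion of g is accurate. *)
Lemma scaled_minimum_lower eps : 0 < eps ->
  exists N, forall n, (N <= n)%nat -> - (R2 * R2) / (2 * V) - eps <= INR n * m n.
Proof.
  intros Heps. assert (HR2 : 0 < R2 * R2) by nra. assert (HVV : 0 < V * V) by nra.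
  set (e := Rmin (V / 4) (eps * (V * V) / (2 * (R2 * R2)))).
  assert (He : 0 < e) by (apply Rmin_pos; [lra|apply Rdiv_lt_0_compat; [apply Rmult_lt_0_compat|]; lra]).
  assert (He1 : e <= V / 4) by apply Rmin_l.
  assert (Herr : 2 * (R2 * R2) * e / (V * V) <= eps).
  { pose proof (Rmin_r (V / 4) (eps * (V * V) / (2 * (R2 * R2)))) as He2. fold e in He2.
    apply (Rmult_le_compat_l (2 * (R2 * R2) / (V * V))) in He2;
      [|apply Rlt_le, Rdiv_lt_0_compat; lra].
    replace (2 * (R2 * R2) / (V * V) * (eps * (V * V) / (2 * (R2 * R2)))) with eps in He2
      by (field; lra).
    replace (2 * (R2 * R2) * e / (V * V)) with (2 * (R2 * R2) / (V * V) * e) by (field; lra). lra. }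
  destruct (g_jet e He) as [del [Hdel Bg]].
  assert (Hd : 0 < Rmin del 1) by (apply Rmin_pos; lra).
  pose proof (Rmin_l del 1). pose proof (Rmin_r del 1). set (d := Rmin del 1) in *.
  set (eta := ln (1 + k * (d * d) * V)).
  assert (Hkd : 0 < k * (d * d) * V) by (apply Rmult_lt_0_compat; [apply Rmult_lt_0_compat|]; nra).
  assert (Heta : 0 < eta) by (unfold eta; rewrite <- ln_1; apply ln_increasing; lra).
  assert (Hfar : forall s, d <= s <= 1 -> eta <= g s).
  { intros s Hs. eapply Rle_trans; [|apply g_lower; lra]. apply ln_le; [lra|].
    assert (k * (d * d) <= k * (s * s)) by (apply Rmult_le_compat_l; nra).
    assert (k * (d * d) * V <= k * (s * s) * V) by (apply Rmult_le_compat_r; lra). lra. }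
  destruct (sqrt_INR_eventually_gt (- R2 / eta)) as [N HN]. exists (S N). intros n Hn.
  set (sq := sqrt (INR n)). assert (Hsq : - R2 / eta < sq) by (apply HN; lia).
  assert (0 < - R2 / eta) by (apply Rdiv_lt_0_compat; lra).
  assert (Hsq2 : sq * sq = INR n) by (apply sqrt_sqrt, pos_INR).
  destruct (m_min n ltac:(lia)) as [[s0 [Hs0 Es0]] _]. fold sq in Es0.
  rewrite <- Hsq2, <- Es0.
  assert (HL : - (R2 * R2) / (2 * V) < 0) by (apply Rdiv_neg_pos; lra).
  destruct (Rlt_dec s0 d) as [Hnear|Hfar0].
  - specialize (Bg s0 ltac:(lra)).
    pose proof (Rle_abs (- (g s0 - 0 - 0 * s0 - V / 2 * (s0 * s0)))) as Hab.
    rewrite Rabs_Ropp in Hab.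
    pose proof (scaled_value_near_zero e s0 sq ltac:(lra) ltac:(lra) ltac:(lra)). lra.
  - pose proof (scaled_value_far eta s0 sq Heta (Hfar s0 ltac:(lra)) Hs0 Hsq). lra.
Qed.

Lemma scaled_minimum_limit : Un_cv (fun n => INR n * m n) (- R2 ^ 2 / (2 * V)).
Proof.
  intros eps Heps.
  destruct (scaled_minimum_upper (eps / 2)) as [N1 H1]; [lra|].
  destruct (scaled_minimum_lower (eps / 2)) as [N2 H2]; [lra|].
  exists (Nat.max N1 N2). intros n Hn. specialize (H1 n ltac:(lia)). specialize (H2 n ltac:(lia)).
  replace (R2 ^ 2) with (R2 * R2) by ring. unfold R_dist. apply Rabs_def1; lra.
Qed.

End ScaledMinimum.

Theorem mainTheorem12
  (nx ny : nat) (W : nat -> nat -> R) (P : nat -> R) (C R2 : R)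
  (m : nat -> R) :
  (0 < nx)%nat -> (0 < ny)%nat ->
  is_channel nx ny W ->
  is_distr nx P ->
  is_capacity nx ny W C ->
  MI nx ny P W = C ->
  0 < Vdisp nx ny P W ->
  R2 < 0 ->
  (forall n : nat, (0 < n)%nat ->
     is_min_on (fun s => C * s + R2 / sqrt (INR n) * s + psi nx ny P W s) 0 1 (m n)) ->
  Un_cv (fun n => INR n * m n) (- R2 ^ 2 / (2 * Vdisp nx ny P W)).
Proof.
  intros _ _ Hch Hd Hcap HMI HV HR2 Hmin.
  assert (HC : C = Imean nx ny P W) by (rewrite <- HMI; apply MI_eq_Imean; auto).
  pose proof (Vdisp_eq_variance nx ny P W Hch Hd C Hcap HMI) as HVar.
  apply (scaled_minimum_limit (fun s => C * s + psi nx ny P W s) _ R2 (curv nx ny P W)); auto.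
  - apply curv_pos.
  -
    eapply jet_coef; [apply (jet_plus _ _ _ _ _ _ _ _ (jet_scal C _ _ _ _ jet_id) (jet_psi _ _ _ _ Hch Hd))| | |];
      [ring|rewrite HC; ring|rewrite HVar; field].
  -
    intros s Hs. rewrite HVar, HC. apply psi_lower; auto.
  - intros n Hn. eapply is_min_on_ext; [|apply Hmin; auto]. intros s; simpl; ring.
Qed.
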